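(* For every integer $k\ge1$ there is a family $\mathcal E_k$ of infinite subsets of $\omega$ with $|\mathcal E_k|=2^\omega$ such that: (a) if $e_0,\dots,e_{k-1}\in\mathcal E_k$ then $\bigcap_{i<k}e_i$ is infinite; (b) if $e_0,\dots,e_k$ are distinct elements of $\mathcal E_k$ then $\bigcap_{i\le k}e_i$ is finite; (c) for every uncountable $X\subseteq\mathcal E_k$ there are uncountable $X_0,\dots,X_k\subseteq X$ such that $\bigcap_{i\le k}\bigcup X_i$ is finite. *)

From mathcomp Require Import all_boot.
From mathcomp Require Export boolp classical_sets cardinality.
Set Implicit Arguments. Unset Strict Implicit. Unset Printing Implicit Defensive.

(* Read a set f of naturals as a branch through the binary tree, with bits n f
   its node at level n, and code the naturals as the countably many pairs
   (n, t) where t is a k-tuple of nodes of level n. The set e_f collects the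
   pairs whose tuple contains the level-n node of f. Any k branches fit
   together in a tuple at every level, so any k of the sets e_f meet in an
   infinite set. Distinct branches eventually have distinct nodes, so k + 1 of
   them never fit in a k-tuple beyond some level, and the corresponding k + 1
   sets e_f meet finitely. For an uncountable family, all but countably many
   of its branches are condensation branches, around which every cone of the
   family is uncountable; separate k + 1 of them at some level m, and let X_i
   consist of the e_f with f in the cone of the i-th one at level m. *)

From mathcomp Require Import all_boot boolp classical_sets cardinality.

Set Implicit Arguments.
Unset Strict Implicit.
Unset Printing Implicit Defensive.

Local Open Scope classical_set_scope.
Local Open Scope card_scope.

Lemma countableU T (A B : set T) : countable A -> countable B -> countable (A `|` B).
Proof.
move=> cA cB.
apply: (sub_countable (B := \bigcup_(b in [set: bool]) if b then A else B)).
  by apply: subset_card_le => x [Ax|Bx]; [exists true | exists false].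
by apply: bigcup_countable => // -[].
Qed.

Lemma infinite_set_inj (T : pointedType) (A : set T) :
  infinite_set A -> exists2 h : nat -> T, (forall n, A (h n)) & injective h.
Proof.
move=> /infiniteP /pcard_leP /injfunPex [h hA hinj].
exists h => [n | m n]; first exact: hA.
by apply: hinj; rewrite inE.
Qed.

Lemma choice_range I T U (f : T -> U) (e : I -> U) :
  (forall i, range f (e i)) -> exists g : I -> T, e = f \o g.
Proof.
move=> he; have /choice [g fg] : forall i, exists x, f x = e i.
  by move=> i; have [x _ fx] := he i; exists x.
by exists g; apply: funext => i; rewrite /= fg.
Qed.

Lemma card_inj_mem_tuple (T : eqType) (I : finType) k (t : k.-tuple T) (h : I -> T) :
  injective h -> (forall i, h i \in t) -> (#|I| <= k)%N.
Proof.
move=> hinj ht; rewrite -(size_tuple t) cardE -(size_map h).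
by apply: uniq_leq_size; [rewrite map_inj_uniq ?enum_uniq | move=> _ /mapP [i _ ->]].
Qed.

Definition bits n (f : set nat) : n.-tuple bool := [tuple `[< f i >] | i < n].

Lemma tnth_bits n f (i : 'I_n) : tnth (bits n f) i = `[< f i >].
Proof. exact: tnth_mktuple. Qed.

Lemma bits_leq m n f g : (m <= n)%N -> bits n f = bits n g -> bits m f = bits m g.
Proof.
move=> mn fg; apply: eq_from_tnth => i; rewrite !tnth_bits.
by have := congr1 (fun t => tnth t (widen_ord mn i)) fg; rewrite !tnth_bits.
Qed.

Lemma bits_neq f g : f <> g -> exists d, forall n, (d < n)%N -> bits n f <> bits n g.
Proof.
move=> fg; have [d fgd] : exists d, f d <> g d.
  by apply: contra_notP fg => /forallNP fg; apply: funext => d; apply: contra_notP (fg d).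
exists d => n dn fgn; apply: fgd.
have := congr1 (fun t => tnth t (Ordinal dn)) fgn; rewrite !tnth_bits => fgd_bit.
by rewrite -(asboolE (f d)) fgd_bit asboolE.
Qed.

Lemma bits_inj_eventually (I : finType) (f : I -> set nat) : injective f ->
  exists N, forall n, (N <= n)%N -> injective (fun i => bits n (f i)).
Proof.
move=> finj.
have /choice [d hd] : forall p : I * I, exists d, p.1 <> p.2 ->
    forall n, (d < n)%N -> bits n (f p.1) <> bits n (f p.2).
  move=> [i j]; have [-> | ij] := pselect (i = j); first by exists 0%N.
  by have [d hd] := bits_neq (fun fij => ij (finj _ _ fij)); exists d.
exists (\max_p d p).+1 => n Nn i j /= fij; apply: contrapT => ij.
by apply: (hd (i, j) ij n _ fij); apply: leq_ltn_trans Nn; apply: leq_bigmax.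
Qed.

Definition cone (F : set (set nat)) n f := [set g | F g /\ bits n g = bits n f].

Lemma countable_thin_branches F :
  countable [set f | F f /\ exists n, countable (cone F n f)].
Proof.
pose S n (s : n.-tuple bool) := [set f | F f /\ countable (cone F n f) /\ bits n f = s].
apply: (sub_countable
  (B := \bigcup_(n in [set: nat]) \bigcup_(s in [set: n.-tuple bool]) S n s)).
  by apply: subset_card_le => f [Ff [n cf]]; exists n => //; exists (bits n f).
apply: bigcup_countable (countableP _) _ => n _.
apply: bigcup_countable (countableP _) _ => s _.
have [-> | /set0P [f0 [_ [cf0 f0s]]]] := eqVneq (S n s) set0; first exact: countable0.
by apply: sub_countable (subset_card_le _) cf0 => f [Ff [_ fs]]; split; rewrite ?fs.
Qed.

Lemma uncountable_condensation_branches F : ~ countable F ->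
  ~ countable [set f | F f /\ forall n, ~ countable (cone F n f)].
Proof.
move=> F_unc thick_ctbl; apply: F_unc.
apply: sub_countable (countableU thick_ctbl (countable_thin_branches F)).
apply: subset_card_le => f Ff.
have [thick | /existsNP [n /contrapT thin]] :=
  pselect (forall n, ~ countable (cone F n f)); first by left.
by right; split; last exists n.
Qed.

Section BranchSets.
Variable k : nat.

Definition wordtuple := {n : nat & k.-tuple (n.-tuple bool)}.

Definition branch_set (f : set nat) : set nat :=
  pickle @` [set x : wordtuple | bits (tag x) f \in (tagged x : seq _)].

Definition codes_below N : set nat := pickle @` [set x : wordtuple | (tag x < N)%N].

Lemma finite_codes_below N : finite_set (codes_below N).
Proof.
apply: finite_image.
pose widen (y : {n : 'I_N & k.-tuple (n.-tuple bool)}) : wordtuple :=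
  Tagged (fun n => k.-tuple (n.-tuple bool)) (tagged y).
apply: (sub_finite_set (B := widen @` setT)); last exact/finite_image/finite_finset.
move=> [n t] /= nN.
by exists (Tagged (fun n : 'I_N => k.-tuple (n.-tuple bool)) (i := Ordinal nN) t).
Qed.

Lemma branch_set_inj : (0 < k)%N -> injective branch_set.
Proof.
move=> k_gt0 f g; apply: contra_eq => /eqP /bits_neq [d fg_d]; apply/eqP => efg.
pose x : wordtuple := Tagged _ (i := d.+1) [tuple bits d.+1 f | _ < k].
have : branch_set f (pickle x).
  exists x => //=; have := mem_tnth (Ordinal k_gt0) [tuple bits d.+1 f | _ < k].
  by rewrite tnth_mktuple.
rewrite efg => -[y /= gy /(pcan_inj pickleK) yx].
by move: gy; rewrite yx /= => /mapP [i _ /esym]; apply: fg_d.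
Qed.

Lemma bigcap_branch_set_infinite (fs : 'I_k -> set nat) :
  infinite_set (\bigcap_(i in [set: 'I_k]) branch_set (fs i)).
Proof.
pose x n : wordtuple := Tagged _ (i := n) [tuple bits n (fs i) | i < k].
have code_inj : injective (pickle \o x).
  by move=> m n /(pcan_inj pickleK) /(congr1 tag).
apply: (sub_infinite_set (A := range (pickle \o x))).
  move=> _ [n _ <-] i _; exists (x n) => //=.
  by have := mem_tnth i [tuple bits n (fs i) | i < k]; rewrite tnth_mktuple.
by rewrite (eq_finite_set (inj_card_eq (in2W code_inj))); exact: infinite_nat.
Qed.

Lemma bigcap_branch_set_sub (fs : 'I_k.+1 -> set nat) M :
  (forall n, (M <= n)%N -> injective (fun i => bits n (fs i))) ->
  \bigcap_(i in [set: 'I_k.+1]) branch_set (fs i) `<=` codes_below M.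
Proof.
move=> fs_sep c fs_c.
have /choice [x fs_x] : forall i, exists x : wordtuple,
    bits (tag x) (fs i) \in (tagged x : seq _) /\ pickle x = c.
  by move=> i; have [x ? <-] := fs_c i I; exists x.
have xE i : x i = x ord0 by apply: (pcan_inj pickleK); rewrite (fs_x i).2 (fs_x ord0).2.
exists (x ord0); last exact: (fs_x ord0).2.
rewrite /=; case: ltnP => // /fs_sep sep_x; suff : (k.+1 <= k)%N by rewrite ltnn.
rewrite -[k.+1]card_ord; apply: (card_inj_mem_tuple (t := tagged (x ord0)) sep_x) => i.
by have := (fs_x i).1; rewrite xE.
Qed.

Lemma bigcap_branch_set_finite (fs : 'I_k.+1 -> set nat) : injective fs ->
  finite_set (\bigcap_(i in [set: 'I_k.+1]) branch_set (fs i)).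
Proof.
move=> /bits_inj_eventually [N fs_sep].
exact: sub_finite_set (bigcap_branch_set_sub fs_sep) (finite_codes_below N).
Qed.

Lemma bigcap_bigcup_cone_sub F m (g : 'I_k.+1 -> set nat) :
  injective (fun i => bits m (g i)) ->
  \bigcap_(i in [set: 'I_k.+1]) \bigcup_(x in branch_set @` cone F m (g i)) x
    `<=` codes_below m.
Proof.
move=> g_sep c g_c.
have /choice [fs fs_c] : forall i, exists f, cone F m (g i) f /\ branch_set f c.
  by move=> i; have [_ [f ? <-] ?] := g_c i I; exists f.
apply: (bigcap_branch_set_sub (fs := fs)) => [n mn i j /= fs_ij | i _].
  by apply: g_sep; rewrite /= -(fs_c i).1.2 -(fs_c j).1.2; exact: bits_leq mn fs_ij.
exact: (fs_c i).2.
Qed.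

Definition branch_family := range branch_set.

Lemma branch_family_bigcap_infinite (e : 'I_k -> set nat) :
  (forall i, branch_family (e i)) ->
  infinite_set (\bigcap_(i in [set: 'I_k]) e i).
Proof. by move=> /choice_range [fs ->]; exact: bigcap_branch_set_infinite. Qed.

Lemma branch_family_bigcap_finite (e : 'I_k.+1 -> set nat) : injective e ->
  (forall i, branch_family (e i)) ->
  finite_set (\bigcap_(i in [set: 'I_k.+1]) e i).
Proof.
move=> e_inj /choice_range [fs e_fs]; rewrite e_fs in e_inj *.
exact: bigcap_branch_set_finite (inj_compr e_inj).
Qed.

Hypothesis k_gt0 : (0 < k)%N.

Lemma branch_family_infinite e : branch_family e -> infinite_set e.
Proof.
move=> [f _ <-].
apply: (sub_infinite_set (A := \bigcap_(i in [set: 'I_k]) branch_set f)).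
  by move=> c /(_ (Ordinal k_gt0) I).
exact: bigcap_branch_set_infinite (fun=> f).
Qed.

Lemma card_branch_family : branch_family #= [set: set nat].
Proof. exact: inj_card_eq (in2W (branch_set_inj k_gt0)). Qed.

Lemma branch_family_uncountable_split X : X `<=` branch_family -> ~ countable X ->
  exists Xs : 'I_k.+1 -> set (set nat),
    (forall i, Xs i `<=` X /\ ~ countable (Xs i)) /\
    finite_set (\bigcap_(i in [set: 'I_k.+1]) \bigcup_(x in Xs i) x).
Proof.
move=> X_sub X_unc; pose F := branch_set @^-1` X.
have F_unc : ~ countable F.
  apply: contra_not X_unc => /(sub_countable (card_image_le branch_set F)).
  apply: sub_countable; apply: subset_card_le => x Xx.
  by have [f _ fx] := X_sub x Xx; exists f; rewrite // /F /preimage /= fx.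
have [g g_thick g_inj] := infinite_set_inj
  (contra_not (@finite_set_countable _ _) (uncountable_condensation_branches F_unc)).
have [m /(_ m (leqnn m)) g_sep] := bits_inj_eventually (inj_comp g_inj (@ord_inj k.+1)).
exists (fun i => branch_set @` cone F m (g i)); split.
  move=> i; split; first by move=> _ [f [Ff _] <-].
  rewrite (eq_countable (inj_card_eq (in2W (branch_set_inj k_gt0)))).
  exact: (g_thick i).2.
exact: sub_finite_set (bigcap_bigcup_cone_sub g_sep) (finite_codes_below m).
Qed.
End BranchSets.

Unset Implicit Arguments.

Theorem lemma5p3 (k : nat) (hk : (1 <= k)%N) :
  exists E : set (set nat),
    (forall e, E e -> infinite_set e) /\
    (E #= [set: set nat]) /\
    (forall e : 'I_k -> set nat, (forall i, E (e i)) ->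
        infinite_set (\bigcap_(i in [set: 'I_k]) e i)) /\
    (forall e : 'I_k.+1 -> set nat, injective e -> (forall i, E (e i)) ->
        finite_set (\bigcap_(i in [set: 'I_k.+1]) e i)) /\
    (forall X : set (set nat), X `<=` E -> ~ countable X ->
        exists Xs : 'I_k.+1 -> set (set nat),
          (forall i, Xs i `<=` X /\ ~ countable (Xs i)) /\
          finite_set (\bigcap_(i in [set: 'I_k.+1]) \bigcup_(x in Xs i) x)).
Proof.
exists (branch_family k).
split; first exact: branch_family_infinite.
split; first exact: card_branch_family.
split; first exact: branch_family_bigcap_infinite.
split; first exact: branch_family_bigcap_finite.
exact: branch_family_uncountable_split.
Qed.
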